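(* For every integer $r\ge 0$, let $K_r$ be the closure of the 3-braid $\sigma_1^{-r}\sigma_2\sigma_1^{3}\sigma_2$. Then $K_r$ is a quasi-alternating link, and $|\det K_r|=r+6$.
   Context: $\sigma_1,\sigma_2$ are the standard Artin generators of the 3-strand braid group. For $r\ge 5$, the link $K_r$ is the pretzel link $P(-r,3,-2)$; for $r=5$ it is the mirror of $10_{125}$. A link $L$ is quasi-alternating if it lies in the smallest set $\mathcal Q$ of links with the following two properties. First, the unknot is in $\mathcal Q$. Second, suppose $L$ has a diagram with a crossing whose two resolutions $L_0,L_1$ satisfy $L_0,L_1\in\mathcal Q$, $\det L_0,\det L_1\neq0$, and $\det L=\det L_0+\det L_1$; then $L\in\mathcal Q$. *)

From HB Require Import structures.
From mathcomp Require Import all_boot all_order all_algebra all_field.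
From Stdlib Require Import Relations.Relation_Operators.
Set Implicit Arguments. Unset Strict Implicit. Unset Printing Implicit Defensive.
Import Order.TTheory GRing.Theory Num.Theory.

(* Unoriented link diagrams, given as Morse (plat-like) diagrams: a word of *)
(* elementary horizontal slices read from bottom to top.  A slice acts on   *)
(* the current row of endpoints, numbered 0,1,2,... from left to right.     *)
(*   (KCup, i) : creates a minimum whose two ends are new points i, i+1     *)
(*   (KCap, i) : joins points i and i+1 by a maximum                        *)
(*   (KPos, i) : crossing of points i, i+1; the strand going from bottom    *)
(*               position i to top position i+1 is the OVER strand          *)
(*               (braid generator sigma_i)                                  *)
(*   (KNeg, i) : the other crossing (sigma_i^-1)                            *)
Inductive kind := KCup | KCap | KPos | KNeg.
Definition slice := (kind * nat)%type.

Definition kin (k : kind) : nat := if k is KCup then 0 else 2.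
Definition kout (k : kind) : nat := if k is KCap then 0 else 2.

Definition step_width (n : nat) (s : slice) : option nat :=
  if s.2 + kin s.1 <= n then Some (n - kin s.1 + kout s.1) else None.

Fixpoint wfrom (n : nat) (w : seq slice) : option nat :=
  match w with
  | [::] => Some n
  | s :: w' => if step_width n s is Some m then wfrom m w' else None
  end.

Definition closedD (D : seq slice) : bool := wfrom 0 D == Some 0%N.

(* Isotopy: local moves (planar isotopy of Morse diagrams = interchange,    *)
(* zigzag, sliding crossings past extrema; and Reidemeister I, II, III).    *)
Inductive move : seq slice -> seq slice -> Prop :=
| mv_far (k l : kind) (i j : nat) : j + kin l <= i ->
    move [:: (k, i); (l, j)] [:: (l, j); (k, i + kout l - kin l)]
| mv_zig1 i : move [:: (KCup, i); (KCap, i.+1)] [::]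
| mv_zig2 i : move [:: (KCup, i.+1); (KCap, i)] [::]
| mv_R2a i : move [:: (KPos, i); (KNeg, i)] [::]
| mv_R2b i : move [:: (KNeg, i); (KPos, i)] [::]
| mv_R3 i : move [:: (KPos, i); (KPos, i.+1); (KPos, i)]
                 [:: (KPos, i.+1); (KPos, i); (KPos, i.+1)]
| mv_R1cupP i : move [:: (KCup, i); (KPos, i)] [:: (KCup, i)]
| mv_R1cupN i : move [:: (KCup, i); (KNeg, i)] [:: (KCup, i)]
| mv_R1capP i : move [:: (KPos, i); (KCap, i)] [:: (KCap, i)]
| mv_R1capN i : move [:: (KNeg, i); (KCap, i)] [:: (KCap, i)]
| mv_cupP i : move [:: (KCup, i); (KPos, i.+1)] [:: (KCup, i.+1); (KNeg, i)]
| mv_cupN i : move [:: (KCup, i); (KNeg, i.+1)] [:: (KCup, i.+1); (KPos, i)]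
| mv_capP i : move [:: (KPos, i.+1); (KCap, i)] [:: (KNeg, i); (KCap, i.+1)]
| mv_capN i : move [:: (KNeg, i.+1); (KCap, i)] [:: (KPos, i); (KCap, i.+1)].

Definition istep (D1 D2 : seq slice) : Prop :=
  exists u v l r, move l r /\ D1 = u ++ l ++ v /\ D2 = u ++ r ++ v
                  /\ closedD D1 /\ closedD D2.

Definition iso : seq slice -> seq slice -> Prop := clos_refl_sym_trans _ istep.

(* Determinant: |<D>| with the Kauffman bracket evaluated at A = e^{i pi/4} *)
(* (i.e. |V_L(-1)|, the usual determinant), normalised by <O> = 1.          *)
Definition Abr : algC := (4.-root (-1))%R.
Definition delta : algC := (- (Abr ^+ 2) - (Abr ^+ 2)^-1)%R.

Local Open Scope ring_scope.
Fixpoint states (w : seq slice) : seq (algC * seq slice) :=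
  match w with
  | [::] => [:: (1, [::])]
  | s :: w' =>
    let st := states w' in
    match s.1 with
    | KPos => [seq (Abr * p.1, p.2) | p <- st] ++
              [seq (Abr^-1 * p.1, (KCap, s.2) :: (KCup, s.2) :: p.2) | p <- st]
    | KNeg => [seq (Abr^-1 * p.1, p.2) | p <- st] ++
              [seq (Abr * p.1, (KCap, s.2) :: (KCup, s.2) :: p.2) | p <- st]
    | _ => [seq (p.1, s :: p.2) | p <- st]
    end
  end.

Local Close Scope ring_scope.
(* loop counting in a crossingless diagram: m maps each current endpoint to *)
(* the other endpoint of the arc through it                                *)
Definition cupm (i : nat) (m : seq nat) : seq nat :=
  let sh := [seq (if i <= x then x.+2 else x) | x <- m] in
  take i sh ++ [:: i.+1; i] ++ drop i sh.

Definition delm (i : nat) (m : seq nat) : seq nat :=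
  [seq (if i.+1 < x then x - 2 else x) | x <- take i m ++ drop i.+2 m].

Definition capm (i : nat) (m : seq nat) : nat * seq nat :=
  let a := nth 0 m i in let b := nth 0 m i.+1 in
  if a == i.+1 then (1%N, delm i m)
  else (0%N, delm i (set_nth 0 (set_nth 0 m a b) b a)).

Fixpoint loops_aux (w : seq slice) (m : seq nat) : nat :=
  match w with
  | [::] => 0
  | (KCup, i) :: w' => loops_aux w' (cupm i m)
  | (KCap, i) :: w' => let p := capm i m in (p.1 + loops_aux w' p.2)%N
  | _ :: w' => loops_aux w' m
  end.

Definition loops (w : seq slice) : nat := loops_aux w [::].

Local Open Scope ring_scope.
Definition bracket (D : seq slice) : algC :=
  \sum_(p <- states D) p.1 * delta ^+ (loops p.2).-1.

Definition det (D : seq slice) : algC := `|bracket D|.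

Local Close Scope ring_scope.
Definition unknotD : seq slice := [:: (KCup, 0%N); (KCap, 0%N)].

Definition is_crossing (k : kind) : bool :=
  match k with KPos | KNeg => true | _ => false end.

Local Open Scope ring_scope.
Inductive QA : seq slice -> Prop :=
| QA_unknot D : closedD D -> iso D unknotD -> QA D
| QA_skein (D' : seq slice) (u v : seq slice) (k : kind) (i : nat) :
    let D := u ++ (k, i) :: v in
    let D0 := u ++ v in
    let D1 := u ++ [:: (KCap, i); (KCup, i)] ++ v in
    closedD D -> is_crossing k ->
    QA D0 -> QA D1 -> det D0 != 0 -> det D1 != 0 ->
    det D = det D0 + det D1 ->
    iso D' D -> QA D'.

Local Close Scope ring_scope.
(* Closure of a 3-braid: sigma_i = (KPos, i-1), sigma_i^-1 = (KNeg, i-1).   *)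
Definition closure3 (b : seq slice) : seq slice :=
  [:: (KCup, 0%N); (KCup, 1%N); (KCup, 2%N)] ++ b ++
  [:: (KCap, 2%N); (KCap, 1%N); (KCap, 0%N)].

Definition sig1 : slice := (KPos, 0%N).
Definition sig1inv : slice := (KNeg, 0%N).
Definition sig2 : slice := (KPos, 1%N).

Definition Kr (r : nat) : seq slice :=
  closure3 (nseq r sig1inv ++ [:: sig2; sig1; sig1; sig1; sig2]).

From HB Require Import structures.
From mathcomp Require Import all_boot all_order all_algebra all_field.
Import Order.TTheory GRing.Theory Num.Theory.
From Stdlib Require Import Relations.Relation_Operators.
Local Open Scope ring_scope.

(* Resolving its leftmost crossing
   s1^-1 gives K_(r-1) and the diagram Kr_hsmooth (r-1), which is an unknot;
   so both claims follow by induction on r once we know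
     det K_r = r + 6,   det (Kr_hsmooth r) = 1,   and   K_0 is quasi-alternating.
   At A = e^(i pi/4) the loop value delta vanishes, so the Kauffman bracket only
   sees states with a single loop.  From the skein relation of the bracket at a
   crossing preceded by crossingless slices we get
     <K_(r+1)> = A^-1 <K_r> + A <Kr_hsmooth r>,
   and, since the kink at the front of Kr_hsmooth splits off a trivial circle
   in one of its smoothings, <Kr_hsmooth r> = A^-r <Kr_hsmooth 0>; the two
   remaining base values are evaluated by a verified computation of the
   bracket. *)

Lemma Abr4 : Abr ^+ 4 = -1.
Proof. by rewrite /Abr rootCK. Qed.

Lemma Abr_neq0 : Abr != 0.
Proof. by apply: contra_eqN Abr4 => /eqP->; rewrite expr0n eq_sym oppr_eq0 oner_eq0. Qed.

Lemma Abr8 : Abr ^+ 8 = 1.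
Proof. by rewrite (exprM Abr 4 2) Abr4 sqrrN expr1n. Qed.

Lemma Abr_inv : Abr^-1 = Abr ^+ 7.
Proof. by apply: (mulfI Abr_neq0); rewrite mulfV ?Abr_neq0 // -exprS Abr8. Qed.

Lemma norm_Abr : `|Abr| = 1.
Proof. by apply/eqP; rewrite -(pexpr_eq1 (n:=4)) // -normrX Abr4 normrN normr1. Qed.

(* A^2 = i, so the loop value -A^2 - A^-2 is zero. *)
Lemma delta0 : delta = 0.
Proof.
have inv2 : (Abr ^+ 2)^-1 = - Abr ^+ 2.
  apply: (mulfI (expf_neq0 2 Abr_neq0)).
  by rewrite mulfV ?expf_neq0 ?Abr_neq0 // mulrN -exprD Abr4 opprK.
by rewrite /delta inv2 opprK addNr.
Qed.

(* Kauffman states with their weight recorded as an exponent e of A (the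
   weight A^-1 being A^7); this form can be evaluated by computation. *)
Fixpoint resolutions (w : seq slice) : seq (nat * seq slice) :=
  match w with
  | [::] => [:: (0%N, [::])]
  | s :: w' =>
    let st := resolutions w' in
    match s.1 with
    | KPos => [seq (p.1.+1, p.2) | p <- st] ++
              [seq ((p.1 + 7)%N, (KCap, s.2) :: (KCup, s.2) :: p.2) | p <- st]
    | KNeg => [seq ((p.1 + 7)%N, p.2) | p <- st] ++
              [seq (p.1.+1, (KCap, s.2) :: (KCup, s.2) :: p.2) | p <- st]
    | _ => [seq (p.1, s :: p.2) | p <- st]
    end
  end.

Lemma statesE w : states w = [seq (Abr ^+ p.1, p.2) | p <- resolutions w].
Proof.
elim: w => [|[k i] w IH] //=; rewrite IH.
by case: k; rewrite /= ?map_cat -!map_comp; try congr (_ ++ _); apply: eq_map => p;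
  rewrite /= ?exprS ?exprD ?Abr_inv ?(mulrC (Abr ^+ 7)).
Qed.

Definition noncross (s : slice) : bool := ~~ is_crossing s.1.

Definition hsmooth (i : nat) : seq slice := [:: (KCap, i); (KCup, i)].

Lemma states_prefix u w : all noncross u ->
  states (u ++ w) = [seq (p.1, u ++ p.2) | p <- states w].
Proof.
elim: u => [_|[k i] u IH]; first by elim: (states w) => //= -[a b] s <-.
by case: k => //= /IH ->; rewrite -map_comp.
Qed.

Lemma bracket_prefix u w : all noncross u ->
  bracket (u ++ w) = \sum_(p <- states w) p.1 * delta ^+ (loops (u ++ p.2)).-1.
Proof. by move=> hu; rewrite /bracket states_prefix // big_map. Qed.

Lemma bracket_skein_neg u i w : all noncross u ->
  bracket (u ++ (KNeg, i) :: w) =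
  Abr^-1 * bracket (u ++ w) + Abr * bracket (u ++ hsmooth i ++ w).
Proof.
move=> hu; rewrite !bracket_prefix //= big_cat !big_map !big_distrr.
by congr (_ + _); apply: eq_bigr => p _ /=; rewrite mulrA.
Qed.

Lemma loops_cupcap q m :
  loops_aux ((KCup, 0%N) :: (KCap, 0%N) :: q) m = (loops_aux q m).+1.
Proof.
rewrite /= /capm /cupm /delm take0 drop0 /= add1n drop0 -map_comp.
by rewrite (eq_map (g := id)) ?map_id // => x /=; rewrite subn2.
Qed.

Lemma loops_circle v q m :
  loops_aux (v ++ (KCup, 0%N) :: (KCap, 0%N) :: q) m = (loops_aux (v ++ q) m).+1.
Proof.
elim: v m => [|[k i] v IH] m; first exact: loops_cupcap.
by case: k => //=; rewrite IH ?addnS.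
Qed.

Lemma loops_double_smooth u q :
  loops (u ++ hsmooth 0 ++ hsmooth 0 ++ q) = (loops (u ++ hsmooth 0 ++ q)).+1.
Proof.
have := loops_circle (u ++ [:: (KCap, 0%N)]) ((KCup, 0%N) :: q) [::].
by rewrite -!catA.
Qed.

(* Every state of w leaves at least one loop in u ++ hsmooth 0 ++ w; then a
   kink s1^-1 right after hsmooth 0 only multiplies the bracket by A^-1. *)
Definition kinkable (u w : seq slice) : bool :=
  all (fun p => 0 < loops (u ++ hsmooth 0 ++ p.2))%N (resolutions w).

Lemma kinkable_neg u w : kinkable u w -> kinkable u ((KNeg, 0%N) :: w).
Proof.
rewrite /kinkable /= all_cat !all_map => hw; apply/andP; split=> //.
by apply: sub_all hw => p /= hp; rewrite (loops_double_smooth u p.2).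
Qed.

Lemma bracket_kink u w : all noncross u -> kinkable u w ->
  bracket (u ++ hsmooth 0 ++ (KNeg, 0%N) :: w) =
  Abr^-1 * bracket (u ++ hsmooth 0 ++ w).
Proof.
move=> hu hw; have hu0 : all noncross (u ++ hsmooth 0) by rewrite all_cat hu.
rewrite catA bracket_skein_neg // -!catA.
suff -> : bracket (u ++ hsmooth 0 ++ hsmooth 0 ++ w) = 0 by rewrite mulr0 addr0.
rewrite !catA bracket_prefix; last by rewrite !all_cat hu.
rewrite statesE big_map; move: hw; rewrite /kinkable.
elim: (resolutions w) => [|p s IHs]; first by rewrite big_nil.
rewrite big_cons /= => /andP[hp /IHs ->].
by rewrite -!catA loops_double_smooth /= delta0 expr0n gtn_eqF // mulr0 addr0.
Qed.

Lemma bracket_kinks u r w : all noncross u -> kinkable u w ->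
  bracket (u ++ hsmooth 0 ++ nseq r (KNeg, 0%N) ++ w) =
  Abr^-1 ^+ r * bracket (u ++ hsmooth 0 ++ w).
Proof.
move=> hu hw; elim: r => [|r IH]; first by rewrite mul1r.
have hr : kinkable u (nseq r (KNeg, 0%N) ++ w).
  by elim: r {IH} => // r; apply: kinkable_neg.
by rewrite /= bracket_kink // IH exprS mulrA.
Qed.

(* Exact evaluation of the bracket: A^e = +-A^(e mod 4), so the bracket is an
   integer combination of 1, A, A^2, A^3 computed by coeffs. *)

Definition coeff_sign (e : nat) : int := if (e %% 8 < 4)%N then 1 else -1.

Lemma Abr_expE e : Abr ^+ e = (coeff_sign e)%:~R * Abr ^+ (e %% 4).
Proof.
have -> : Abr ^+ e = Abr ^+ (e %% 8).
  by rewrite {1}(divn_eq e 8) exprD mulnC exprM Abr8 expr1n mul1r.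
rewrite /coeff_sign -(modn_dvdm e (isT : 4 %| 8)%N).
have : (e %% 8 < 8)%N by rewrite ltn_pmod.
move: (e %% 8)%N => k; do 8?[case: k => [|k] //=]; rewrite ?mul1r // => _;
  by rewrite (exprD Abr 4) Abr4 mulN1r.
Qed.

Definition addc (e : nat) (c : seq int) : seq int :=
  set_nth 0 c (e %% 4) (nth 0 c (e %% 4) + coeff_sign e).

Definition coeffs (s : seq nat) : seq int := foldr addc [:: 0; 0; 0; 0] s.

Definition evalc (c : seq int) : algC := \sum_(j < 4) (nth 0 c j)%:~R * Abr ^+ j.

Lemma evalc_addc e c : evalc (addc e c) = Abr ^+ e + evalc c.
Proof.
have hj : (e %% 4 < 4)%N by rewrite ltn_pmod.
rewrite /evalc /addc Abr_expE (bigD1 (Ordinal hj)) // [in RHS](bigD1 (Ordinal hj)) //=.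
rewrite nth_set_nth /= eqxx intrD mulrDl -addrA addrCA; congr (_ + (_ + _)).
by apply: eq_bigr => i hi; rewrite nth_set_nth /= ifN.
Qed.

Lemma evalc_coeffs s : evalc (coeffs s) = \sum_(e <- s) Abr ^+ e.
Proof.
elim: s => [|e s IH]; last by rewrite big_cons /= evalc_addc IH.
by rewrite big_nil /evalc big1 // => -[[|[|[|[|//]]]] ?] _; rewrite mul0r.
Qed.

(* Since delta = 0, only the states with (at most) one loop contribute. *)
Definition single_loop_exps (D : seq slice) : seq nat :=
  [seq p.1 | p <- resolutions D & ((loops p.2).-1 == 0)%N].

Lemma bracket_coeffs D : bracket D = evalc (coeffs (single_loop_exps D)).
Proof.
rewrite /bracket statesE big_map evalc_coeffs big_map big_filter [RHS]big_mkcond.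
by apply: eq_bigr => p _ /=; rewrite delta0 expr0n; case: eqP; rewrite ?mulr1 ?mulr0.
Qed.

Lemma bracket_single D j (n : int) : (j < 4)%N ->
  coeffs (single_loop_exps D) = set_nth 0 [:: 0; 0; 0; 0] j n ->
  bracket D = n%:~R * Abr ^+ j.
Proof.
move=> hj hc; rewrite bracket_coeffs hc /evalc (bigD1 (Ordinal hj)) //=.
rewrite nth_set_nth /= eqxx big1 ?addr0 // => i hi; rewrite nth_set_nth /= ifN //.
by case: i hi => -[|[|[|[|//]]]] ? _; rewrite /= mul0r.
Qed.

(* When the bracket is a single monomial n A^j, the determinant is |n|. *)
Definition det_value (D : seq slice) : option nat :=
  let c := coeffs (single_loop_exps D) in
  let j := find (fun x => x != 0) c in
  if (j < 4)%N && (c == set_nth 0 [:: 0; 0; 0; 0] j (nth 0 c j))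
  then Some (absz (nth 0 c j)) else None.

Lemma det_valueP D n : det_value D = Some n -> det D = n%:R.
Proof.
rewrite /det_value; case: andP => // -[hj /eqP hc] [<-].
rewrite /det (bracket_single _ _ _ hj hc) normrM normrX norm_Abr expr1n mulr1.
by rewrite natr_absz intr_norm.
Qed.

Lemma iso_of_move u v l r : move l r ->
  closedD (u ++ l ++ v) -> closedD (u ++ r ++ v) -> iso (u ++ l ++ v) (u ++ r ++ v).
Proof. by move=> m hl hr; apply: rst_step; exists u, v, l, r. Qed.

Lemma split_at p s (D : seq slice) : take (size s) (drop p D) = s ->
  D = take p D ++ s ++ drop (p + size s) D.
Proof.
move=> hs; rewrite -{1}(cat_take_drop p D) -{1}(cat_take_drop (size s) (drop p D)).
by rewrite hs drop_drop addnC.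
Qed.

Lemma iso_move_at p {l r D E : seq slice} : move l r ->
  take (size l) (drop p D) = l ->
  closedD D -> closedD (take p D ++ r ++ drop (p + size l) D) ->
  iso (take p D ++ r ++ drop (p + size l) D) E -> iso D E.
Proof.
move=> m /split_at eD hD hD'; apply: rst_trans.
by have := iso_of_move (take p D) (drop (p + size l) D) l r m; rewrite -eD; apply.
Qed.

Lemma iso_move_back_at p {l r D E : seq slice} : move l r ->
  take (size r) (drop p D) = r ->
  closedD D -> closedD (take p D ++ l ++ drop (p + size r) D) ->
  iso (take p D ++ l ++ drop (p + size r) D) E -> iso D E.
Proof.
move=> m /split_at eD hD hD'; apply: rst_trans; apply: rst_sym.
by have := iso_of_move (take p D) (drop (p + size r) D) l r m; rewrite -eD; apply.
Qed.

Definition crossing_at0 (s : slice) : bool := is_crossing s.1 && (s.2 == 0%N).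

Lemma wfrom_cat n u w :
  wfrom n (u ++ w) = if wfrom n u is Some m then wfrom m w else None.
Proof. by elim: u n => //= s u IH n; case: step_width. Qed.

Lemma wfrom_crossings_at0 n tw w : (2 <= n)%N -> all crossing_at0 tw ->
  wfrom n (tw ++ w) = wfrom n w.
Proof.
move=> hn; elim: tw => //= -[k i] tw IH /andP[/andP[hk /eqP /= ->] /IH <-].
by case: k hk => // _; rewrite /step_width /= hn subnK.
Qed.

Lemma closed_kinks u tw v : all crossing_at0 tw ->
  closedD (u ++ (KCup, 0%N) :: tw ++ v) = closedD (u ++ (KCup, 0%N) :: v).
Proof.
move=> htw; rewrite /closedD !wfrom_cat; case: (wfrom 0 u) => //= m.
by rewrite /step_width /= subn0 wfrom_crossings_at0 // leq_addl.
Qed.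

Lemma iso_kinks u tw v : all crossing_at0 tw -> closedD (u ++ (KCup, 0%N) :: v) ->
  iso (u ++ (KCup, 0%N) :: tw ++ v) (u ++ (KCup, 0%N) :: v).
Proof.
elim: tw => [|[k i] tw IH] htw hv; first exact: rst_refl.
move: htw; rewrite /= /crossing_at0 /= => /andP[/andP[hk /eqP ->] htw].
apply: rst_trans (IH htw hv).
have hcl : closedD (u ++ (KCup, 0%N) :: tw ++ v) by rewrite closed_kinks.
have hcl' : closedD (u ++ (KCup, 0%N) :: [:: (k, 0%N)] ++ tw ++ v).
  by rewrite closed_kinks //= /crossing_at0 hk.
case: k hk hcl' => // _ hcl'.
  exact: (iso_of_move _ _ _ _ (mv_R1cupP 0)) hcl' hcl.
exact: (iso_of_move _ _ _ _ (mv_R1cupN 0)) hcl' hcl.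
Qed.

Lemma QA_skein_nat u v k i (d0 d1 : nat) :
  closedD (u ++ (k, i) :: v) -> is_crossing k ->
  QA (u ++ v) -> QA (u ++ hsmooth i ++ v) ->
  det (u ++ v) = d0%:R -> det (u ++ hsmooth i ++ v) = d1%:R ->
  det (u ++ (k, i) :: v) = (d0 + d1)%:R -> (0 < d0)%N -> (0 < d1)%N ->
  QA (u ++ (k, i) :: v).
Proof.
move=> hD hk q0 q1 e0 e1 e hd0 hd1.
have n0 : det (u ++ v) != 0 by rewrite e0 pnatr_eq0 -lt0n.
have n1 : det (u ++ hsmooth i ++ v) != 0 by rewrite e1 pnatr_eq0 -lt0n.
have add : det (u ++ (k, i) :: v) = det (u ++ v) + det (u ++ hsmooth i ++ v).
  by rewrite e e0 e1 natrD.
exact: (QA_skein hD hk q0 q1 n0 n1 add (rst_refl _ _ _)).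
Qed.

Definition vsmooth_at (p : nat) (D : seq slice) : seq slice :=
  take p D ++ drop p.+1 D.

Definition hsmooth_at (p : nat) (D : seq slice) : seq slice :=
  take p D ++ hsmooth (nth (KCup, 0%N) D p).2 ++ drop p.+1 D.

Definition resolvable (D : seq slice) (p : nat) : bool :=
  [&& is_crossing (nth (KCup, 0%N) D p).1, closedD D &
   match det_value D, det_value (vsmooth_at p D), det_value (hsmooth_at p D) with
   | Some d, Some d0, Some d1 => [&& 0 < d0, 0 < d1 & d == d0 + d1]%N
   | _, _, _ => false
   end].

Lemma QA_resolve p D : resolvable D p ->
  QA (vsmooth_at p D) -> QA (hsmooth_at p D) -> QA D.
Proof.
rewrite /resolvable /vsmooth_at /hsmooth_at; case def_c: (nth _ D p) => [k i] /=.
case/and3P=> hk hD; have hp : (p < size D)%N.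
  rewrite ltnNge; apply: contraL hk => /(nth_default (KCup, 0%N)).
  by rewrite def_c => -[-> _].
have eD : D = take p D ++ (k, i) :: drop p.+1 D.
  by rewrite -def_c -drop_nth ?cat_take_drop.
case e: (det_value D) => [d|] //; case e0: (det_value _) => [d0|] //.
case e1: (det_value _) => [d1|] //; case/and3P=> hd0 hd1 /eqP hd q0 q1.
rewrite eD; apply: (QA_skein_nat _ _ _ _ d0 d1); rewrite -?eD -?hd //.
all: exact: det_valueP.
Qed.

Definition cups3 : seq slice := [:: (KCup, 0%N); (KCup, 1%N); (KCup, 2%N)].
Definition caps3 : seq slice := [:: (KCap, 2%N); (KCap, 1%N); (KCap, 0%N)].

Lemma closure3E b : closure3 b = cups3 ++ b ++ caps3.
Proof. by []. Qed.

(* After a horizontal smoothing of s1, a cup sits at position 0. *)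
Lemma closure3_hsmoothE p x : closure3 (p ++ hsmooth 0 ++ x) =
  (cups3 ++ p ++ [:: (KCap, 0%N)]) ++ (KCup, 0%N) :: x ++ caps3.
Proof. by rewrite closure3E -!catA. Qed.

Lemma closed_absorb_kinks p tw w : all crossing_at0 tw ->
  closedD (closure3 (p ++ hsmooth 0 ++ tw ++ w)) =
  closedD (closure3 (p ++ hsmooth 0 ++ w)).
Proof.
by move=> htw; rewrite !closure3_hsmoothE -[(tw ++ w) ++ _]catA closed_kinks.
Qed.

Lemma iso_absorb_kinks p tw w : all crossing_at0 tw ->
  closedD (closure3 (p ++ hsmooth 0 ++ w)) ->
  iso (closure3 (p ++ hsmooth 0 ++ tw ++ w)) (closure3 (p ++ hsmooth 0 ++ w)).
Proof.
by rewrite !closure3_hsmoothE -[(tw ++ w) ++ _]catA; apply: iso_kinks.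
Qed.

Lemma crossing_at0_sig1 k : all crossing_at0 (nseq k sig1).
Proof. by rewrite all_nseq orbT. Qed.

Lemma crossing_at0_sig1inv k : all crossing_at0 (nseq k sig1inv).
Proof. by rewrite all_nseq orbT. Qed.

Lemma unknot_s1s2 : iso (closure3 [:: sig1; sig2]) unknotD.
Proof.
apply: (iso_move_back_at 4 (mv_capN 1)) => //=.
apply: (iso_move_back_at 3 (@mv_far KNeg KPos 2 0 erefl)) => //=.
apply: (iso_move_at 2 (mv_R1cupN 2)) => //=.
apply: (iso_move_at 2 (@mv_far KCup KPos 2 0 erefl)) => //=.
apply: (iso_move_at 3 (mv_zig2 1)) => //=.
apply: (iso_move_back_at 1 (mv_cupN 0)) => //=.
apply: (iso_move_at 2 (mv_R1capN 1)) => //=.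
apply: (iso_move_at 1 (mv_zig1 0)) => //=.
exact: rst_refl.
Qed.

Lemma unknot_h1s2 : iso (closure3 (hsmooth 0 ++ [:: sig2])) unknotD.
Proof.
apply: (iso_move_at 2 (@mv_far KCup KCap 2 0 erefl)) => //=.
apply: (iso_move_at 1 (mv_zig2 0)) => //=.
apply: (iso_move_back_at 3 (mv_capN 1)) => //=.
apply: (iso_move_at 1 (@mv_far KCup KCup 0 0 erefl)) => //=.
apply: (iso_move_at 2 (mv_R1cupN 2)) => //=.
apply: (iso_move_at 2 (mv_zig2 1)) => //=.
apply: (iso_move_at 1 (mv_zig1 0)) => //=.
exact: rst_refl.
Qed.

Lemma unknot_h2s1s2 : iso (closure3 (hsmooth 1 ++ [:: sig1; sig2])) unknotD.
Proof.
apply: (iso_move_at 2 (mv_zig2 1)) => //=.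
apply: (iso_move_back_at 2 (mv_cupN 0)) => //=.
apply: (iso_move_at 3 (mv_R2b 1)) => //=.
apply: (iso_move_at 1 (@mv_far KCup KCup 1 0 erefl)) => //=.
apply: (iso_move_at 2 (mv_zig2 2)) => //=.
apply: (iso_move_at 1 (mv_zig1 0)) => //=.
exact: rst_refl.
Qed.

Lemma unknot_h2h1s2 : iso (closure3 (hsmooth 1 ++ hsmooth 0 ++ [:: sig2])) unknotD.
Proof.
apply: (iso_move_at 2 (mv_zig2 1)) => //=.
apply: (iso_move_at 2 (mv_zig2 0)) => //=.
apply: (iso_move_at 1 (@mv_far KCup KCup 1 0 erefl)) => //=.
apply: (iso_move_at 2 (@mv_far KCup KPos 3 1 erefl)) => //=.
apply: (iso_move_at 3 (mv_zig2 2)) => //=.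
apply: (iso_move_at 2 (mv_R1capP 1)) => //=.
apply: (iso_move_at 1 (mv_zig1 0)) => //=.
exact: rst_refl.
Qed.

Definition braid0 : seq slice := [:: sig2; sig1; sig1; sig1; sig2].

Lemma unknot_h1_braid0 : iso (closure3 (hsmooth 0 ++ braid0)) unknotD.
Proof.
apply: (iso_move_at 2 (@mv_far KCup KCap 2 0 erefl)) => //=.
apply: (iso_move_at 1 (mv_zig2 0)) => //=.
apply: (iso_move_at 2 (mv_cupP 0)) => //=.
apply: (iso_move_at 3 (mv_R2b 0)) => //=.
apply: (iso_move_back_at 2 (mv_cupN 0)) => //=.
apply: (iso_move_back_at 5 (mv_capN 1)) => //=.
apply: (iso_move_back_at 4 (@mv_far KNeg KPos 2 0 erefl)) => //=.
apply: (iso_move_at 1 (@mv_far KCup KCup 0 0 erefl)) => //=.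
apply: (iso_move_back_at 2 (mv_cupP 1)) => //=.
apply: (iso_move_at 3 (mv_R2a 2)) => //=.
apply: (iso_move_back_at 2 (mv_cupN 0)) => //=.
apply: (iso_move_at 3 (mv_R1capN 1)) => //=.
apply: (iso_move_at 2 (mv_zig1 0)) => //=.
apply: (iso_move_at 1 (mv_zig1 0)) => //=.
exact: rst_refl.
Qed.

(* K_0 is quasi-alternating: resolving first s2, then s1 twice, in the closures
   of s1^3 s2 and of (horizontally smoothed s2) s1^3 s2 ends in unknots. *)

Lemma QA_closure_s1cube_s2 : QA (closure3 (nseq 3 sig1 ++ [:: sig2])).
Proof.
have leaf k : iso (closure3 (hsmooth 0 ++ nseq k sig1 ++ [:: sig2])) unknotD.
  exact: rst_trans (iso_absorb_kinks [::] _ _ (crossing_at0_sig1 k) _) unknot_h1s2.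
apply: (QA_resolve 3); first by vm_compute.
  apply: (QA_resolve 3); first by vm_compute.
    exact: QA_unknot unknot_s1s2.
  exact: QA_unknot (leaf 1%N).
exact: QA_unknot (leaf 2%N).
Qed.

Lemma QA_closure_h2_s1cube_s2 :
  QA (closure3 (hsmooth 1 ++ nseq 3 sig1 ++ [:: sig2])).
Proof.
have leaf k : iso (closure3 (hsmooth 1 ++ hsmooth 0 ++ nseq k sig1 ++ [:: sig2])) unknotD.
  exact: rst_trans (iso_absorb_kinks _ _ _ (crossing_at0_sig1 k) _) unknot_h2h1s2.
apply: (QA_resolve 5); first by vm_compute.
  apply: (QA_resolve 5); first by vm_compute.
    exact: QA_unknot unknot_h2s1s2.
  exact: QA_unknot (leaf 1%N).
exact: QA_unknot (leaf 2%N).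
Qed.

Lemma QA_K0 : QA (Kr 0).
Proof.
apply: (QA_resolve 3); first by vm_compute.
  exact: QA_closure_s1cube_s2.
exact: QA_closure_h2_s1cube_s2.
Qed.

Definition Kr_hsmooth (r : nat) : seq slice :=
  closure3 (hsmooth 0 ++ nseq r sig1inv ++ braid0).

Lemma Kr_succE r :
  Kr r.+1 = cups3 ++ (KNeg, 0%N) :: (nseq r sig1inv ++ braid0) ++ caps3.
Proof. by []. Qed.

Lemma closed_Kr r : closedD (Kr r).
Proof.
rewrite /closedD /Kr closure3E wfrom_cat /= -catA.
by rewrite wfrom_crossings_at0 ?crossing_at0_sig1inv.
Qed.

Lemma QA_Kr_hsmooth r : QA (Kr_hsmooth r).
Proof.
have tw := crossing_at0_sig1inv r.
apply: QA_unknot.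
  by rewrite /Kr_hsmooth (closed_absorb_kinks [::] _ braid0 tw).
exact: rst_trans (iso_absorb_kinks [::] _ _ tw _) unknot_h1_braid0.
Qed.

Lemma bracket_Kr_succ r :
  bracket (Kr r.+1) = Abr^-1 * bracket (Kr r) + Abr * bracket (Kr_hsmooth r).
Proof. by rewrite Kr_succE bracket_skein_neg. Qed.

Lemma kinkable_braid0 : kinkable cups3 (braid0 ++ caps3).
Proof. by vm_compute. Qed.

Lemma bracket_Kr_hsmooth r :
  bracket (Kr_hsmooth r) = Abr^-1 ^+ r * bracket (Kr_hsmooth 0).
Proof.
by rewrite /Kr_hsmooth !closure3E -!catA bracket_kinks // kinkable_braid0.
Qed.

Lemma bracket_Kr0 : bracket (Kr 0) = 6 * Abr.
Proof. by rewrite (bracket_single _ 1 6) //; vm_compute. Qed.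

Lemma bracket_Kr_hsmooth0 : bracket (Kr_hsmooth 0) = - Abr ^+ 3.
Proof. by rewrite (bracket_single _ 3 (-1)) ?mulN1r //; vm_compute. Qed.

Lemma bracket_Kr r : bracket (Kr r) = (r + 6)%:R * Abr * Abr^-1 ^+ r.
Proof.
elim: r => [|r IH]; first by rewrite bracket_Kr0 mulr1.
rewrite bracket_Kr_succ IH bracket_Kr_hsmooth bracket_Kr_hsmooth0.
have AV : Abr * Abr^-1 = 1 by rewrite mulfV ?Abr_neq0.
have kink : Abr * (Abr^-1 ^+ r * - Abr ^+ 3) = Abr * Abr^-1 ^+ r.+1.
  by rewrite !mulrN mulrCA -exprS Abr4 mulrN1 opprK exprS mulrA AV mul1r.
have -> : (r.+1 + 6)%:R = (r + 6)%:R + 1 :> algC by rewrite addSn -addn1 natrD.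
rewrite kink !mulrDl mul1r; congr (_ + _).
by rewrite exprS mulrCA.
Qed.

Lemma det_Kr r : det (Kr r) = (r + 6)%:R.
Proof.
rewrite /det bracket_Kr !normrM normrX normfV norm_Abr invr1 expr1n !mulr1.
exact: normr_nat.
Qed.

Lemma det_Kr_hsmooth r : det (Kr_hsmooth r) = 1.
Proof.
rewrite /det bracket_Kr_hsmooth bracket_Kr_hsmooth0 normrM normrX normfV.
by rewrite norm_Abr invr1 expr1n mul1r normrN normrX norm_Abr expr1n.
Qed.

Theorem mainTheorem4 (r : nat) :
  QA (Kr r) /\ det (Kr r) = (r + 6)%:R.
Proof.
split; last exact: det_Kr.
elim: r => [|r IH]; first exact: QA_K0.
rewrite Kr_succE; apply: (QA_skein_nat _ _ _ _ (r + 6) 1); rewrite -?Kr_succE //.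
- exact: closed_Kr.
- exact: QA_Kr_hsmooth.
- exact: det_Kr.
- exact: det_Kr_hsmooth.
- by rewrite det_Kr addn1 addSn.
- by rewrite addnS.
Qed.
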